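(* Under the setting and assumptions in the context, $$\max_{z\in\{0,1\}}\Pr(Y=1,R=0\mid Z=z)\ \le\ \Pr(Y(0)=1)\ \le\ \min_{z\in\{0,1\}}\Pr(Y=1\mid Z=z),$$ $$\max_{z\in\{0,1\}}\Pr(Y=1\mid Z=z)\ \le\ \Pr(Y(1)=1)\ \le\ 1-\max_{z\in\{0,1\}}\Pr(Y=0,R=1\mid Z=z).$$
   Context: Units are drawn from a population (a probability space). Each unit has a binary assignment $Z\in\{0,1\}$ with $0<\Pr(Z=1)<1$, binary potential recommendations $R(0),R(1)\in\{0,1\}$, and binary potential outcomes $Y(0),Y(1)\in\{0,1\}$ indexed by the recommendation only (exclusion restriction). Observed quantities are $R=R(Z)$ and $Y=Y(R(Z))$. Assumptions: (Randomization) $Z$ is independent of $(R(0),R(1),Y(0),Y(1))$; (Monotonicity) $Y(1)\ge Y(0)$ almost surely. *)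

From HB Require Import structures.
From mathcomp Require Import all_boot all_order all_algebra.
From mathcomp Require Import all_classical all_reals.
From mathcomp Require Import ereal topology normedtype sequences measure probability.
Set Implicit Arguments. Unset Strict Implicit. Unset Printing Implicit Defensive.
Import Order.TTheory GRing.Theory Num.Theory.
Local Open Scope classical_set_scope.
Local Open Scope ring_scope.

Definition pr d (T : measurableType d) (R : realType)
  (P : probability T R) (A : set T) : R := fine (P A).

Definition condpr d (T : measurableType d) (R : realType)
  (P : probability T R) (A B : set T) : R :=
  pr P (A `&` B) / pr P B.

Definition indep_rv d (T : measurableType d) (R : realType)
  (P : probability T R) (A B : Type) (X : T -> A) (W : T -> B) : Prop :=
  forall (a : A) (b : B),
    P ([set t | X t = a] `&` [set t | W t = b]) =
    (P [set t | X t = a] * P [set t | W t = b])%E.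

Definition obsR (T : Type) (Z R0 R1 : T -> bool) : T -> bool :=
  fun t => if Z t then R1 t else R0 t.
Definition obsY (T : Type) (Z R0 R1 Y0 Y1 : T -> bool) : T -> bool :=
  fun t => if obsR Z R0 R1 t then Y1 t else Y0 t.

From HB Require Import structures.
From mathcomp Require Import all_boot all_order all_algebra.
From mathcomp Require Import all_classical all_reals.
From mathcomp Require Import ereal topology normedtype sequences measure probability.
Import Order.TTheory GRing.Theory Num.Theory.
Local Open Scope classical_set_scope.
Local Open Scope ring_scope.

Set Implicit Arguments.
Unset Strict Implicit.
Unset Printing Implicit Defensive.

(* By randomization, given Z = z the latent vector (R(0), R(1), Y(0), Y(1))
   keeps its marginal law, and on {Z = z} the observed pair (R, Y) equals
   (R(z), Y(R(z))), a function of that vector.  So every conditional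
   probability in the bounds is the unconditional probability of a latent
   event: Pr(Y=1, R=0 | Z=z) = Pr(Y(0)=1, R(z)=0) <= Pr(Y(0)=1);
   Pr(Y=1 | Z=z) = Pr(Y(R(z))=1), which lies between Pr(Y(0)=1) and
   Pr(Y(1)=1) by monotonicity; and Pr(Y=0, R=1 | Z=z) = Pr(Y(1)=0, R(z)=1)
   <= 1 - Pr(Y(1)=1). *)

Section probability_of_events.
Variables (d : measure_display) (T : measurableType d) (R : realType).
Variable P : probability T R.

Lemma measure_prE (A : set T) : measurable A -> P A = (pr P A)%:E.
Proof. by move=> mA; rewrite /pr fineK // fin_num_measure. Qed.

Lemma le_pr (A B : set T) :
  measurable A -> measurable B -> A `<=` B -> pr P A <= pr P B.
Proof.
by move=> mA mB AB; rewrite -lee_fin -!measure_prE //; apply: le_measure; rewrite ?inE.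
Qed.

Lemma le_pr_ae (A B : set T) : measurable A -> measurable B ->
  {ae P, forall t, A t -> B t} -> pr P A <= pr P B.
Proof.
move=> mA mB; case=> N [mN PN ABN]; rewrite -lee_fin -!measure_prE //.
have AsubBN : A `<=` B `|` N.
  by move=> t At; have [Bt|nBt] := pselect (B t); [left | right; apply: ABN => /(_ At)].
apply: le_trans (le_measure _ _ _ AsubBN) _; rewrite ?inE //; first exact: measurableU.
apply: le_trans (measureU2 _ _ _) _ => //.
by rewrite [X in (_ + X)%E](_ : _ = 0%E) ?adde0 //; exact: PN.
Qed.

Lemma pr_setC (A : set T) : measurable A -> pr P (~` A) = 1 - pr P A.
Proof. by move=> mA; rewrite /pr probability_setC // fineB ?fin_num_measure. Qed.

Lemma measurable_eq_bool (f : T -> bool) (b : bool) :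
  measurable [set t | f t] -> measurable [set t | f t = b].
Proof.
case: b => // mf; rewrite (_ : [set t | f t = false] = ~` [set t | f t]).
  exact: measurableC.
by apply/seteqP; split => t /=; case: (f t).
Qed.

Lemma pr_eq_bool_gt0 (Z : T -> bool) : measurable [set t | Z t] ->
  (0 < P [set t | Z t])%E -> (P [set t | Z t] < 1)%E ->
  forall z, 0 < pr P [set t | Z t = z].
Proof.
move=> mZ Zgt0 Zlt1 [].
  by rewrite -lte_fin -measure_prE.
have -> : [set t | Z t = false] = ~` [set t | Z t].
  by apply/seteqP; split => t /=; case: (Z t).
by rewrite pr_setC // subr_gt0 -lte_fin -measure_prE.
Qed.

Variables (X : finType) (W : T -> X).
Hypothesis mW : forall x, measurable [set t | W t = x].

Lemma preimage_bigcup_fibers (S : set X) :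
  [set t | S (W t)] = \bigcup_(x in S) [set t | W t = x].
Proof. by apply/seteqP; split => [t St | t [x Sx /= ->]] //; exists (W t). Qed.

Lemma measurable_preimage (S : set X) : measurable [set t | S (W t)].
Proof.
by rewrite preimage_bigcup_fibers; apply: fin_bigcup_measurable => //; exact: finite_finset.
Qed.

Lemma indep_rv_preimage (A : Type) (Z : T -> A) (a : A) (S : set X) :
  measurable [set t | Z t = a] -> indep_rv P Z W ->
  P ([set t | Z t = a] `&` [set t | S (W t)]) =
  (P [set t | Z t = a] * P [set t | S (W t)])%E.
Proof.
move=> mZ indep; have finS := @finite_finset X S.
have trivW : trivIset S (fun x => [set t | W t = x]).
  by move=> x y _ _ [t [/= <- <-]].
rewrite preimage_bigcup_fibers setI_bigcupr !measure_fin_bigcup //; last 2 first.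
- by move=> x y Sx Sy [t [[_ Wx] [_ Wy]]]; apply: trivW => //; exists t.
- by move=> x _; exact: measurableI.
by rewrite ge0_mule_fsumr //; apply: eq_fsbigr => x _; exact: indep.
Qed.

Lemma condpr_indep_rv (A : Type) (Z : T -> A) (G : A -> set X) (a : A) :
  measurable [set t | Z t = a] -> pr P [set t | Z t = a] != 0 ->
  indep_rv P Z W ->
  condpr P [set t | G (Z t) (W t)] [set t | Z t = a] = pr P [set t | G a (W t)].
Proof.
move=> mZ Zneq0 indep; rewrite /condpr.
have -> : [set t | G (Z t) (W t)] `&` [set t | Z t = a] =
          [set t | Z t = a] `&` [set t | G a (W t)].
  by apply/seteqP; split => t /= [];
    [move=> + Za; rewrite Za | move=> Za; rewrite Za].
have mG := measurable_preimage (G a).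
rewrite /pr indep_rv_preimage // fineM ?fin_num_measure //.
by rewrite mulrAC divff ?mul1r.
Qed.

End probability_of_events.

Definition potential_rec (z : bool) (x : bool * bool * bool * bool) : bool :=
  let: (r0, r1, _, _) := x in if z then r1 else r0.

Definition potential_out (z : bool) (x : bool * bool * bool * bool) : bool :=
  let: (_, _, y0, y1) := x in if potential_rec z x then y1 else y0.

Section instrumental_variable_bounds.
Variables (d : measure_display) (T : measurableType d) (R : realType).
Variables (P : probability T R) (Z R0 R1 Y0 Y1 : T -> bool).
Hypotheses (mZ : measurable [set t | Z t]) (mR0 : measurable [set t | R0 t])
  (mR1 : measurable [set t | R1 t]) (mY0 : measurable [set t | Y0 t])
  (mY1 : measurable [set t | Y1 t]).
Hypotheses (hZpos : (0 < P [set t | Z t])%E) (hZlt1 : (P [set t | Z t] < 1)%E).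
Hypothesis hrand : indep_rv P Z (fun t => (R0 t, R1 t, Y0 t, Y1 t)).
Hypothesis hmono : {ae P, forall t, Y0 t ==> Y1 t}.

Local Notation W := (fun t => (R0 t, R1 t, Y0 t, Y1 t)).
Local Notation Ro := (obsR Z R0 R1).
Local Notation Yo := (obsY Z R0 R1 Y0 Y1).
Local Notation Zis z := [set t | Z t = z].

Lemma measurable_potentials_eq x : measurable [set t | W t = x].
Proof.
case: x => [[[r0 r1] y0] y1].
have -> : [set t | W t = (r0, r1, y0, y1)] = [set t | R0 t = r0] `&`
    [set t | R1 t = r1] `&` [set t | Y0 t = y0] `&` [set t | Y1 t = y1].
  by apply/seteqP; split => t /=; [case=> -> -> -> -> | case=> [[[-> ->] ->] ->]].
by repeat apply: measurableI; exact: measurable_eq_bool.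
Qed.

(* [Ro t] and [Yo t] are convertible to [potential_rec (Z t) (W t)] and
   [potential_out (Z t) (W t)], so every observed event has the shape of the
   left-hand side. *)
Lemma condpr_assignment (G : bool -> bool * bool * bool * bool -> Prop) z :
  condpr P [set t | G (Z t) (W t)] (Zis z) = pr P [set t | G z (W t)].
Proof.
apply: condpr_indep_rv => //; first exact: measurable_potentials_eq.
- exact: measurable_eq_bool.
- by apply: lt0r_neq0; exact: pr_eq_bool_gt0.
Qed.

Lemma measurable_potential_event (S : set (bool * bool * bool * bool)) :
  measurable [set t | S (W t)].
Proof. exact: measurable_preimage measurable_potentials_eq S. Qed.

Lemma condpr_Y_notR_le z :
  condpr P [set t | Yo t /\ ~~ Ro t] (Zis z) <= pr P [set t | Y0 t].
Proof.
pose G b x := potential_out b x /\ ~~ potential_rec b x.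
rewrite (condpr_assignment G); apply: le_pr (measurable_potential_event (G z)) mY0 _.
by move=> t; rewrite /G /=; case: z (R0 t) (R1 t) => [] [] [] [].
Qed.

Lemma pr_Y0_le_condpr_Y z :
  pr P [set t | Y0 t] <= condpr P [set t | Yo t] (Zis z).
Proof.
rewrite (condpr_assignment potential_out).
apply: le_pr_ae mY0 (measurable_potential_event (potential_out z)) _.
apply: filterS hmono => t /implyP; rewrite /potential_out /=.
by case: z (R0 t) (R1 t) => [] [] [] //; apply.
Qed.

Lemma condpr_Y_le_pr_Y1 z :
  condpr P [set t | Yo t] (Zis z) <= pr P [set t | Y1 t].
Proof.
rewrite (condpr_assignment potential_out).
apply: le_pr_ae (measurable_potential_event (potential_out z)) mY1 _.
apply: filterS hmono => t /implyP; rewrite /potential_out /=.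
by case: z (R0 t) (R1 t) => [] [] [] //; apply.
Qed.

Lemma condpr_notY_R_le z :
  condpr P [set t | ~~ Yo t /\ Ro t] (Zis z) <= 1 - pr P [set t | Y1 t].
Proof.
pose G b x := ~~ potential_out b x /\ potential_rec b x.
rewrite (condpr_assignment G) -pr_setC //.
apply: le_pr (measurable_potential_event (G z)) (measurableC mY1) _.
by move=> t; rewrite /G /=; case: z (R0 t) (R1 t) (Y1 t) => [] [] [] [] [] //= [].
Qed.

End instrumental_variable_bounds.

Theorem mainTheorem5 (d : measure_display) (T : measurableType d) (R : realType)
  (P : probability T R) (Z R0 R1 Y0 Y1 : T -> bool)
  (mZ : measurable [set t | Z t]) (mR0 : measurable [set t | R0 t])
  (mR1 : measurable [set t | R1 t]) (mY0 : measurable [set t | Y0 t])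
  (mY1 : measurable [set t | Y1 t])
  (hZpos : (0 < P [set t | Z t])%E) (hZlt1 : (P [set t | Z t] < 1)%E)
  (hrand : indep_rv P Z (fun t => (R0 t, R1 t, Y0 t, Y1 t)))
  (hmono : {ae P, forall t, Y0 t ==> Y1 t}) :
  let Ro := obsR Z R0 R1 in
  let Yo := obsY Z R0 R1 Y0 Y1 in
  let Zis z := [set t | Z t = z] in
  [/\ Num.max (condpr P [set t | Yo t /\ ~~ Ro t] (Zis false))
              (condpr P [set t | Yo t /\ ~~ Ro t] (Zis true))
        <= pr P [set t | Y0 t],
      pr P [set t | Y0 t]
        <= Num.min (condpr P [set t | Yo t] (Zis false))
                   (condpr P [set t | Yo t] (Zis true)),
      Num.max (condpr P [set t | Yo t] (Zis false))
              (condpr P [set t | Yo t] (Zis true))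
        <= pr P [set t | Y1 t]
    & pr P [set t | Y1 t]
        <= 1 - Num.max (condpr P [set t | ~~ Yo t /\ Ro t] (Zis false))
                       (condpr P [set t | ~~ Yo t /\ Ro t] (Zis true))].
Proof.
move=> Ro Yo Zis.
have lo0 := condpr_Y_notR_le mZ mR0 mR1 mY0 mY1 hZpos hZlt1 hrand.
have hi0 := pr_Y0_le_condpr_Y mZ mR0 mR1 mY0 mY1 hZpos hZlt1 hrand hmono.
have lo1 := condpr_Y_le_pr_Y1 mZ mR0 mR1 mY0 mY1 hZpos hZlt1 hrand hmono.
have hi1 := condpr_notY_R_le mZ mR0 mR1 mY0 mY1 hZpos hZlt1 hrand.
split; rewrite ?ge_max ?le_min ?lo0 ?hi0 ?lo1 //.
by rewrite lerBrDl addrC -lerBrDl ge_max !hi1.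
Qed.
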